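(* Consider the single-hop VAoI system described in the context, operated under the randomized stationary policy with transmission probability $\alpha\in(0,1]$. Then the steady-state probability $\mu_n$ that the VAoI equals $n$ is \[ \mu_n=\begin{cases}\dfrac{\alpha p_s(1-p_g)}{\beta}, & n=0,\\[2mm] \dfrac{\alpha p_s p_g}{\beta^2}, & n=1,\\[2mm] \left[\dfrac{(1-\alpha p_s)p_g}{\beta}\right]^{n-1}\mu_1, & n\ge 2,\end{cases} \] where $\beta=1-(1-\alpha p_s)(1-p_g)$.
   Context: Time is slotted, $t\in\{0,1,2,\dots\}$. An information source generates a new version in each slot independently with probability $p_g$; let $G_t\in\{0,1\}$ indicate whether a new version is generated in slot $t$, so the source version index satisfies $V_S(t+1)=V_S(t)+G_t$. A transmitter always holding the current source version may, in each slot $t$, attempt to send it to a receiver over an erasure channel; $a(t)\in\{0,1\}$ indicates an attempt, and each attempt succeeds independently with probability $p_s$. The Version Age of Information (VAoI) at the receiver is $\Delta(t)=V_S(t)-V_R(t)$, where $V_R(t)$ is the version index stored at the receiver; it evolves as $\Delta(t+1)=G_t$ if $a(t)=1$ and the attempt succeeds, and $\Delta(t+1)=\Delta(t)+G_t$ otherwise. All version-generation and channel events are mutually independent. Assume $0<p_s<1$ and $0<p_g<1$. Under the randomized stationary policy with transmission probability $\alpha$, the actions $a(t)$ are i.i.d. Bernoulli$(\alpha)$, independent of everything else; then $\Delta(t)$ is an ergodic Markov chain on $\{0,1,2,\dots\}$ and $\mu_n$ denotes its stationary probability of state $n$. *)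

From Stdlib Require Import Reals.
From Coquelicot Require Import Coquelicot.
Open Scope R_scope.

Definition bern (p : R) (b : bool) : R := if b then p else 1 - p.

(* One-slot VAoI update: Delta(t+1) = G_t if a(t)=1 and the attempt succeeds,
   Delta(t) + G_t otherwise. *)
Definition vaoi_step (d : nat) (a s g : bool) : nat :=
  if andb a s then Nat.b2n g else (d + Nat.b2n g)%nat.

(* One-step transition probability P(m -> n) of Delta(t) under the randomized
   stationary policy: a ~ Bern(alpha), success ~ Bern(p_s), G ~ Bern(p_g),
   all independent. *)
Definition vaoi_trans (alpha ps pg : R) (m n : nat) : R :=
  let ind (k : nat) := if Nat.eqb k n then 1 else 0 in
  let f a s g := bern alpha a * bern ps s * bern pg g * ind (vaoi_step m a s g) in
  f true true true + f true true false + f true false true + f true false false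
  + f false true true + f false true false + f false false true + f false false false.

Definition stationary (P : nat -> nat -> R) (mu : nat -> R) : Prop :=
  (forall n, 0 <= mu n) /\ is_series mu 1 /\
  (forall n, is_series (fun m => mu m * P m n) (mu n)).

Definition beta (alpha ps pg : R) : R := 1 - (1 - alpha * ps) * (1 - pg).

Definition mu_formula (alpha ps pg : R) (n : nat) : R :=
  let b := beta alpha ps pg in
  let mu1 := alpha * ps * pg / b ^ 2 in
  match n with
  | O => alpha * ps * (1 - pg) / b
  | S O => mu1
  | S (S k) => ((1 - alpha * ps) * pg / b) ^ (S k) * mu1
  end.

(** A transmission succeeds with probability [r = alpha * ps]; a success sends
    the age to [G] and a failure to [m + G].  Hence the balance equations of a
    probability vector [mu] read
    [mu n = r (1 - pg) [n = 0] + r pg [n = 1] + (1 - r)(1 - pg) mu n + (1 - r) pg mu (n - 1)],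
    a first-order recursion which, since [beta = 1 - (1 - r)(1 - pg)] is nonzero,
    has exactly one solution: the closed form, geometric with ratio
    [(1 - r) pg / beta < 1] from [n = 1] on.  Summing the geometric tail shows
    that this solution has total mass one. *)

From Stdlib Require Import Reals Lra.
From Coquelicot Require Import Coquelicot.
Open Scope R_scope.

Definition kron (m n : nat) : R := if Nat.eqb m n then 1 else 0.

Definition lag (f : nat -> R) (n : nat) : R :=
  match n with O => 0 | S k => f k end.

Lemma kron_mul (m n : nat) (f : nat -> R) : kron m n * f m = kron m n * f n.
Proof. unfold kron; destruct (Nat.eqb_spec m n) as [->|_]; ring. Qed.

Lemma kron_succ_mul (m n : nat) (f : nat -> R) :
  kron (S m) n * f m = kron m (Nat.pred n) * lag f n.
Proof. destruct n as [|k]; [unfold kron; simpl; ring | apply (kron_mul m k f)]. Qed.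

Lemma is_series_zero : is_series (fun _ => 0) 0.
Proof.
  change (is_lim_seq (sum_n (fun _ => 0)) 0).
  apply (is_lim_seq_ext (fun _ => 0)); [|apply is_lim_seq_const].
  intro N; rewrite sum_n_const; ring.
Qed.

Lemma is_series_kron (n : nat) (x : R) : is_series (fun m => kron m n * x) x.
Proof.
  induction n as [|n IH]; apply is_series_decr_1.
  - match goal with |- is_series _ ?l => replace l with 0 end;
      [|unfold kron, plus, opp; simpl; ring].
    apply (is_series_ext (fun _ => 0)); [|exact is_series_zero].
    intro m; unfold kron; simpl; ring.
  - match goal with |- is_series _ ?l => replace l with x end;
      [|unfold kron, plus, opp; simpl; ring].
    exact IH.
Qed.

Lemma stationary_ext (P : nat -> nat -> R) (mu nu : nat -> R) :
  (forall n, mu n = nu n) -> stationary P mu -> stationary P nu.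
Proof.
  intros Heq [Hnn [Hsum Hbal]]; split; [|split].
  - intro n; rewrite <- Heq; apply Hnn.
  - exact (is_series_ext _ _ _ Heq Hsum).
  - intro n; rewrite <- Heq.
    apply (is_series_ext (fun m => mu m * P m n)); [|apply Hbal].
    intro m; rewrite Heq; reflexivity.
Qed.

Lemma fixed_point_div (b c x : R) : b <> 0 -> x = c + (1 - b) * x -> x = c / b.
Proof. intros Hb Hx; field_simplify_eq; [lra | exact Hb]. Qed.

Section VAoIChain.

Variables alpha ps pg : R.

Lemma vaoi_trans_kron (m n : nat) :
  vaoi_trans alpha ps pg m n =
  alpha * ps * (1 - pg) * kron 0 n + alpha * ps * pg * kron 1 n
  + (1 - alpha * ps) * (1 - pg) * kron m n + (1 - alpha * ps) * pg * kron (S m) n.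
Proof.
  unfold vaoi_trans, vaoi_step, bern; simpl.
  rewrite Nat.add_0_r, Nat.add_1_r.
  fold (kron 0 n) (kron 1 n) (kron m n) (kron (S m) n).
  change (if match n with 1%nat => true | _ => false end then 1 else 0) with (kron 1 n).
  change (if match n with 0%nat => true | _ => false end then 1 else 0) with (kron 0 n).
  ring.
Qed.

(** One step of the chain applied to [mu]; [total] stands for the total mass of
    [mu], which a successful transmission sends to the states [0] and [1]. *)
Definition vaoi_inflow (total : R) (mu : nat -> R) (n : nat) : R :=
  alpha * ps * (1 - pg) * kron 0 n * total + alpha * ps * pg * kron 1 n * total
  + (1 - alpha * ps) * (1 - pg) * mu n + (1 - alpha * ps) * pg * lag mu n.

Lemma is_series_vaoi_inflow (mu : nat -> R) (total : R) (n : nat) :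
  is_series mu total ->
  is_series (fun m => mu m * vaoi_trans alpha ps pg m n) (vaoi_inflow total mu n).
Proof.
  intro Hmu.
  set (success := alpha * ps * (1 - pg) * kron 0 n + alpha * ps * pg * kron 1 n).
  set (stay := (1 - alpha * ps) * (1 - pg)).
  set (grow := (1 - alpha * ps) * pg).
  assert (Hsum := is_series_plus _ _ _ _
    (is_series_plus _ _ _ _ (is_series_scal_r success _ _ Hmu)
                            (is_series_kron n (stay * mu n)))
    (is_series_kron (Nat.pred n) (grow * lag mu n))).
  replace (vaoi_inflow total mu n)
    with (plus (plus (total * success) (stay * mu n)) (grow * lag mu n))
    by (unfold vaoi_inflow, plus, success, stay, grow; simpl; ring).
  refine (is_series_ext _ _ _ (fun m => _) Hsum); unfold plus; simpl.
  rewrite vaoi_trans_kron; fold success stay grow.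
  rewrite (Rmult_comm stay), (Rmult_comm grow), <- !Rmult_assoc.
  rewrite <- (kron_mul m n mu), <- (kron_succ_mul m n mu); ring.
Qed.

Lemma stationary_iff_balance (mu : nat -> R) :
  stationary (vaoi_trans alpha ps pg) mu <->
  (forall n, 0 <= mu n) /\ is_series mu 1 /\ (forall n, mu n = vaoi_inflow 1 mu n).
Proof.
  split; intros [Hnn [Hsum Hbal]]; repeat split; trivial; intro n.
  - rewrite <- (is_series_unique _ _ (Hbal n)) at 1.
    apply is_series_unique, is_series_vaoi_inflow, Hsum.
  - rewrite (Hbal n); apply is_series_vaoi_inflow, Hsum.
Qed.

Lemma mu_formula_succ (k : nat) :
  mu_formula alpha ps pg (S k) =
  ((1 - alpha * ps) * pg / beta alpha ps pg) ^ k * mu_formula alpha ps pg 1.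
Proof. destruct k; simpl; ring. Qed.

Section BetaNonzero.

Hypothesis beta_neq0 : beta alpha ps pg <> 0.

Lemma mu_formula_balance (n : nat) :
  mu_formula alpha ps pg n = vaoi_inflow 1 (mu_formula alpha ps pg) n.
Proof.
  destruct n as [|[|k]]; unfold vaoi_inflow, kron, lag;
    [| | rewrite (mu_formula_succ (S k)), (mu_formula_succ k)];
    simpl; unfold beta in *; field; exact beta_neq0.
Qed.

Lemma balance_unique (mu : nat -> R) :
  (forall n, mu n = vaoi_inflow 1 mu n) -> forall n, mu n = mu_formula alpha ps pg n.
Proof.
  intro Hbal.
  assert (Hsolve : forall n, mu n =
    (alpha * ps * (1 - pg) * kron 0 n + alpha * ps * pg * kron 1 n
     + (1 - alpha * ps) * pg * lag mu n) / beta alpha ps pg).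
  { intro n; apply fixed_point_div; [exact beta_neq0|].
    rewrite (Hbal n) at 1; unfold vaoi_inflow, beta; ring. }
  assert (M0 : mu 0%nat = mu_formula alpha ps pg 0)
    by (rewrite Hsolve; unfold kron, lag; simpl; field; exact beta_neq0).
  assert (M1 : mu 1%nat = mu_formula alpha ps pg 1).
  { rewrite Hsolve; cbn [lag]; rewrite M0; unfold kron; simpl.
    unfold beta in *; field; exact beta_neq0. }
  intros [|k]; [exact M0|]; induction k as [|k IH]; [exact M1|].
  rewrite Hsolve; cbn [lag]; rewrite IH, (mu_formula_succ (S k)), (mu_formula_succ k).
  unfold kron; simpl; field; exact beta_neq0.
Qed.

End BetaNonzero.

Section Probabilities.

Hypothesis success_prob : 0 < alpha * ps <= 1.
Hypothesis generation_prob : 0 <= pg <= 1.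

Lemma beta_ge_success : alpha * ps <= beta alpha ps pg.
Proof. unfold beta; nra. Qed.

Lemma mu_formula_ge0 (n : nat) : 0 <= mu_formula alpha ps pg n.
Proof.
  assert (Hb := beta_ge_success).
  assert (Hratio : 0 <= (1 - alpha * ps) * pg / beta alpha ps pg)
    by (apply Rdiv_le_0_compat; nra).
  destruct n as [|k].
  - simpl; apply Rdiv_le_0_compat; nra.
  - rewrite mu_formula_succ; apply Rmult_le_pos; [apply pow_le, Hratio|].
    apply Rdiv_le_0_compat; [nra | apply pow_lt; lra].
Qed.

Lemma is_series_mu_formula : is_series (mu_formula alpha ps pg) 1.
Proof.
  assert (Hb := beta_ge_success).
  set (ratio := (1 - alpha * ps) * pg / beta alpha ps pg).
  assert (Hratio : 0 <= ratio < 1).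
  { unfold ratio; split; [apply Rdiv_le_0_compat; nra|].
    apply Rlt_div_l; unfold beta in *; nra. }
  apply is_series_decr_1.
  apply (is_series_ext _ _ _ (fun k => eq_sym (mu_formula_succ k))).
  match goal with
  | |- is_series _ ?l => replace l with (/ (1 - ratio) * mu_formula alpha ps pg 1)
  end.
  - apply is_series_scal_r, is_series_geom; rewrite Rabs_pos_eq; lra.
  - unfold ratio, plus, opp; simpl; unfold beta in *.
    field; split; nra.
Qed.

End Probabilities.

End VAoIChain.

Theorem proposition1 (alpha ps pg : R)
  (Hps : 0 < ps < 1) (Hpg : 0 < pg < 1) (Halpha : 0 < alpha <= 1) :
  forall mu : nat -> R,
    stationary (vaoi_trans alpha ps pg) mu <->
    (forall n : nat, mu n = mu_formula alpha ps pg n).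
Proof.
  intro mu.
  assert (Hsuccess : 0 < alpha * ps <= 1) by (split; nra).
  assert (Hpg01 : 0 <= pg <= 1) by lra.
  assert (Hbeta : beta alpha ps pg <> 0)
    by (pose proof (beta_ge_success alpha ps pg Hsuccess Hpg01); lra).
  split.
  - intros [_ [_ Hbal]]%stationary_iff_balance.
    exact (balance_unique alpha ps pg Hbeta mu Hbal).
  - intro Hmu.
    apply (stationary_ext _ (mu_formula alpha ps pg)); [intro n; symmetry; apply Hmu|].
    apply stationary_iff_balance; repeat split.
    + exact (mu_formula_ge0 alpha ps pg Hsuccess Hpg01).
    + exact (is_series_mu_formula alpha ps pg Hsuccess Hpg01).
    + exact (mu_formula_balance alpha ps pg Hbeta).
Qed.
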